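(* Let $f:[0,1)\to\mathbb{R}$ be a function such that for every positive integer $n$, every real $t\in[0,n)$ and every $p\in[0,1]$, \[ \mathbb{E}\big[\exp(t\cdot V_{n,2,(p,1-p)})\big]\leq f(t/n). \] Let $k\geq 2$ be an integer, $n$ a positive integer, and $P=(p_1,\dots,p_k)$ a probability distribution on a set of size $k$. Then for all $0\leq t<n$, \[ \mathbb{E}\big[\exp(t\cdot V_{n,k,P})\big]\leq f(t/n)^{k-1}. \]
   Context: For a positive integer $n$, an integer $k\geq 2$ and a probability distribution $P=(p_1,\dots,p_k)$ on $\{1,\dots,k\}$, let $X=(X_1,\dots,X_k)$ be multinomially distributed with $n$ samples and probabilities $P$, and define $V_{n,k,P}=D\big((X_1/n,\dots,X_k/n)\,\|\,(p_1,\dots,p_k)\big)$, where $D\big((q_i)_i\,\|\,(p_i)_i\big)=\sum_i q_i\log\frac{q_i}{p_i}$ is the Kullback--Leibler divergence (natural logarithm, convention $0\log(0/p)=0$). In particular $V_{n,2,(p,1-p)}=D\big((B/n,1-B/n)\,\|\,(p,1-p)\big)$ with $B\sim\mathrm{Binom}(n,p)$. *)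

From mathcomp Require Import all_boot all_order all_algebra.
From mathcomp Require Import all_classical all_reals all_analysis.
Set Implicit Arguments. Unset Strict Implicit. Unset Printing Implicit Defensive.
Import Order.TTheory GRing.Theory Num.Theory.
Local Open Scope ring_scope.

Definition KL (R : realType) (k : nat) (q p : 'I_k -> R) : R :=
  \sum_(i < k) (if q i == 0 then 0 else q i * ln (q i / p i)).

(* n i.i.d. samples from P are a function s : 'I_n -> 'I_k, with probability
   prod_j P (s j); the multinomial vector is X_i = #{j | s j = i}. *)
Definition counts (n k : nat) (s : {ffun 'I_n -> 'I_k}) (i : 'I_k) : nat :=
  #|[set j | s j == i]|.

Definition sample_prob (R : realType) (n k : nat) (P : 'I_k -> R)
  (s : {ffun 'I_n -> 'I_k}) : R := \prod_(j < n) P (s j).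

Definition V (R : realType) (n k : nat) (P : 'I_k -> R)
  (s : {ffun 'I_n -> 'I_k}) : R :=
  KL (fun i => (counts s i)%:R / n%:R) P.

Definition mgf_V (R : realType) (n k : nat) (P : 'I_k -> R) (t : R) : R :=
  \sum_(s : {ffun 'I_n -> 'I_k}) sample_prob P s * expR (t * V P s).

Definition binP (R : realType) (p : R) : 'I_2 -> R :=
  fun i => if i == ord0 then p else 1 - p.

Definition is_distr (R : realType) (k : nat) (P : 'I_k -> R) : Prop :=
  (forall i, 0 <= P i) /\ \sum_(i < k) P i = 1.

(* Split each draw from P into a coin telling whether it is the first outcome
   and, when it is not, a draw from the conditional law P' of the other
   outcomes.  The chain rule for the Kullback-Leibler divergence writes
   V_{n,P} as V_{n,(p,1-p)} of the coins plus (c/n) V_{c,P'} of the c draws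
   whose coin is tails.  Given the coins, those c draws form an i.i.d. sample
   from P', so the inner exponential moment is at most f(t/n)^(k-2) by
   induction on the number of outcomes (at most 1 <= f(t/n) when c = 0, the
   bound f >= 1 coming from the point mass p = 0), and the outer one is then at
   most f(t/n) by hypothesis. *)

From mathcomp Require Import all_boot all_order all_algebra.
From mathcomp Require Import all_classical all_reals all_analysis.
From mathcomp Require Import ring.
Import Order.TTheory GRing.Theory Num.Theory.
Set Implicit Arguments. Unset Strict Implicit. Unset Printing Implicit Defensive.
Local Open Scope ring_scope.

Section ProductWeights.
Variable R : comPzSemiRingType.

Lemma sum_prod_pushforward (J U S : finType) (Q : U -> R) (h : U -> S)
    (G : {ffun J -> S} -> R) :
  \sum_(u : {ffun J -> U}) (\prod_j Q (u j)) * G [ffun j => h (u j)] =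
  \sum_(s : {ffun J -> S}) (\prod_j \sum_(x | h x == s j) Q x) * G s.
Proof.
have mapE (s : {ffun J -> S}) (u : {ffun J -> U}) :
    ([ffun j => h (u j)] == s) = (u \in family (fun j x => h x == s j)).
  apply/eqP/familyP => [<- j|hu]; first by rewrite unfold_in /= ffunE.
  by apply/ffunP => j; rewrite ffunE; apply/eqP/hu.
rewrite (partition_big (fun u : {ffun J -> U} => [ffun j => h (u j)]) predT) //.
apply: eq_bigr => s _; rewrite bigA_distr_big_dep big_distrl.
rewrite (eq_bigr (fun u : {ffun J -> U} => \prod_j Q (u j) * G s)) => [|u /eqP -> //].
exact: eq_bigl (mapE s).
Qed.

Lemma sum_prod_pair (J A B : finType) (QA : A -> R) (QB : B -> R)
    (G : {ffun J -> A} -> {ffun J -> B} -> R) :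
  \sum_(a : {ffun J -> A}) \sum_(b : {ffun J -> B})
     (\prod_j QA (a j)) * (\prod_j QB (b j)) * G a b =
  \sum_(u : {ffun J -> A * B})
     (\prod_j (QA (u j).1 * QB (u j).2)) * G [ffun j => (u j).1] [ffun j => (u j).2].
Proof.
pose zip (p : {ffun J -> A} * {ffun J -> B}) := [ffun j => (p.1 j, p.2 j)].
pose unzip (u : {ffun J -> A * B}) := ([ffun j => (u j).1], [ffun j => (u j).2]).
have zipK : cancel zip unzip.
  by case=> a b; congr pair; apply/ffunP => j; rewrite !ffunE.
have unzipK : cancel unzip zip.
  by move=> u; apply/ffunP => j; rewrite !ffunE; case: (u j).
rewrite pair_big (reindex unzip); last by exists zip => ? _.
apply: eq_bigr => u _; rewrite big_split; congr (_ * _ * _).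
all: by apply: eq_bigr => j _; rewrite ffunE.
Qed.

Definition restrict (J I : finType) (B : {set J}) (r : {ffun J -> I}) :
  {ffun 'I_#|B| -> I} := [ffun x => r (enum_val x)].

Lemma sum_prod_restrict (J I : finType) (B : {set J}) (Q : I -> R)
    (G : {ffun 'I_#|B| -> I} -> R) :
  \sum_i Q i = 1 ->
  \sum_(r : {ffun J -> I}) (\prod_j Q (r j)) * G (restrict B r) =
  \sum_(r' : {ffun 'I_#|B| -> I}) (\prod_x Q (r' x)) * G r'.
Proof.
move=> hQ.
pose D (r' : {ffun 'I_#|B| -> I}) j i :=
  [forall x : 'I_#|B|, (enum_val x == j) ==> (i == r' x)].
have restrictE r' r : (restrict B r == r') = (r \in family (D r')).
  apply/eqP/familyP => [<- j|hr].
    by rewrite unfold_in; apply/forallP => x; apply/implyP => /eqP <-; rewrite ffunE.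
  apply/ffunP => x; rewrite ffunE; have := hr (enum_val x).
  by rewrite unfold_in => /forallP/(_ x); rewrite eqxx => /eqP.
have marginal r' : \prod_j \sum_(i | D r' j i) Q i = \prod_x Q (r' x).
  rewrite (bigID (mem B)) /= [X in _ * X]big1 ?mulr1 => [|j jB]; last first.
    rewrite -[RHS]hQ; apply: eq_bigl => i; apply/forallP => x.
    by apply/implyP => /eqP ejx; move: jB; rewrite -ejx enum_valP.
  rewrite big_enum_val; apply: eq_bigr => x _.
  rewrite (eq_bigl (fun i => i == r' x)) ?big_pred1_eq // => i.
  apply/forallP/eqP => [/(_ x)|-> y]; first by rewrite eqxx => /eqP.
  by apply/implyP => /eqP /enum_val_inj ->.
rewrite (partition_big (restrict B) predT) //.
apply: eq_bigr => r' _; rewrite -marginal bigA_distr_big_dep big_distrl.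
rewrite (eq_bigr (fun r : {ffun J -> I} => \prod_j Q (r j) * G r')) => [|r /eqP -> //].
exact: eq_bigl (restrictE r').
Qed.

End ProductWeights.

Lemma counts_restrict (n k : nat) (B : {set 'I_n}) (r : {ffun 'I_n -> 'I_k}) i :
  counts (restrict B r) i = #|[set j in B | r j == i]|.
Proof.
rewrite /counts -!sum1dep_card big_enum_val_cond.
by apply: eq_bigl => x; rewrite ffunE.
Qed.

Lemma sum_counts (n k : nat) (s : {ffun 'I_n -> 'I_k}) : (\sum_i counts s i)%N = n.
Proof.
rewrite -[RHS]card_ord -sum1_card (partition_big s predT) //.
by apply: eq_bigr => i _; rewrite /counts -sum1dep_card.
Qed.

Lemma KL_chain (R : realType) (k : nat) (q P : 'I_k.+2 -> R) (q' P' : 'I_k.+1 -> R) :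
  (forall i, q (lift ord0 i) = (1 - q ord0) * q' i) ->
  (forall i, P (lift ord0 i) = (1 - P ord0) * P' i) ->
  q ord0 <= 1 -> (forall i, 0 <= q' i) -> (q ord0 < 1 -> \sum_i q' i = 1) ->
  (forall i, q (lift ord0 i) != 0 -> 0 < 1 - P ord0 /\ 0 < P' i) ->
  KL q P = KL (binP (q ord0)) (binP (P ord0)) + (1 - q ord0) * KL q' P'.
Proof.
move=> hq hP hq_le1 hq'_ge0 hq'_sum hsupp.
rewrite /KL big_ord_recl [in RHS]big_ord_recl big_ord1 /binP eqxx /= -addrA.
congr (_ + _).
have [q1|q_ne1] := eqVneq (q ord0) 1.
  rewrite q1 subrr eqxx mul0r addr0; apply: big1 => i _.
  by rewrite hq q1 subrr mul0r eqxx.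
have q_lt1 : q ord0 < 1 by rewrite lt_neqAle q_ne1.
have a_gt0 : 0 < 1 - q ord0 by rewrite subr_gt0.
set a := 1 - q ord0 in a_gt0 hq *; set L := ln (a / (1 - P ord0)).
have term i : (if q (lift ord0 i) == 0 then 0
               else q (lift ord0 i) * ln (q (lift ord0 i) / P (lift ord0 i))) =
    a * (if q' i == 0 then 0 else q' i * ln (q' i / P' i)) + q' i * (a * L).
  rewrite hq hP; have [->|q'_ne0] := eqVneq (q' i) 0.
    by rewrite !(mulr0, mul0r) eqxx addr0.
  have aq'_ne0 : a * q' i != 0 by rewrite mulf_neq0 // gt_eqF.
  have [P0_lt1 P'_gt0] : 0 < 1 - P ord0 /\ 0 < P' i by apply: hsupp; rewrite hq.
  have q'_gt0 : 0 < q' i by rewrite lt_neqAle eq_sym q'_ne0 hq'_ge0.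
  rewrite (negbTE aq'_ne0).
  have -> : a * q' i / ((1 - P ord0) * P' i) = q' i / P' i * (a / (1 - P ord0)).
    by field; rewrite !gt_eqF.
  by rewrite lnM ?posrE ?divr_gt0 //; rewrite /L; ring.
rewrite (eq_bigr _ (fun i _ => term i)) big_split /= -big_distrr -big_distrl /=.
by rewrite (gt_eqF a_gt0) hq'_sum // mul1r addrC.
Qed.

Definition join_outcome (k : nat) (b : 'I_2) (r : 'I_k.+1) : 'I_k.+2 :=
  if b == ord0 then ord0 else lift ord0 r.

Definition join_sample (n k : nat) (b : {ffun 'I_n -> 'I_2})
  (r : {ffun 'I_n -> 'I_k.+1}) : {ffun 'I_n -> 'I_k.+2} :=
  [ffun j => join_outcome (b j) (r j)].

Lemma join_outcome_eq0 (k : nat) (b : 'I_2) (r : 'I_k.+1) :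
  (join_outcome b r == ord0) = (b == ord0).
Proof.
by rewrite /join_outcome; case: (eqVneq b ord0).
Qed.

Lemma join_outcome_eq_lift (k : nat) (b : 'I_2) (r i : 'I_k.+1) :
  (join_outcome b r == lift ord0 i) = (b != ord0) && (r == i).
Proof.
by rewrite /join_outcome; case: (eqVneq b ord0) => //= _; rewrite (inj_eq lift_inj).
Qed.

Lemma ord2_neq0 (b : 'I_2) : (b != ord0) = (b == lift ord0 ord0).
Proof. by case: b => [[|[|m]]]. Qed.

Lemma counts_ord2 (n : nat) (b : {ffun 'I_n -> 'I_2}) :
  (counts b ord0 + counts b (lift ord0 ord0))%N = n.
Proof. by rewrite -[RHS](sum_counts b) big_ord_recl big_ord1. Qed.

Lemma counts_neq0 (n : nat) (b : {ffun 'I_n -> 'I_2}) :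
  counts b (lift ord0 ord0) = #|[set j | b j != ord0]|.
Proof. by apply: eq_card => j; rewrite !inE ord2_neq0. Qed.

Lemma counts_join0 (n k : nat) (b : {ffun 'I_n -> 'I_2})
    (r : {ffun 'I_n -> 'I_k.+1}) :
  counts (join_sample b r) ord0 = counts b ord0.
Proof. by apply: eq_card => j; rewrite !inE ffunE join_outcome_eq0. Qed.

Lemma counts_join_lift (n k : nat) (b : {ffun 'I_n -> 'I_2})
    (r : {ffun 'I_n -> 'I_k.+1}) i :
  counts (join_sample b r) (lift ord0 i) = counts (restrict [set j | b j != ord0] r) i.
Proof.
by rewrite counts_restrict; apply: eq_card => j; rewrite !inE ffunE join_outcome_eq_lift.
Qed.

Section EmpiricalDivergence.
Variable R : realType.

Lemma V_binP (n : nat) (p : R) (b : {ffun 'I_n -> 'I_2}) : (0 < n)%N ->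
  V (binP p) b = KL (binP ((counts b ord0)%:R / n%:R)) (binP p).
Proof.
move=> n_gt0; rewrite /V; congr KL; apply/funext => i; rewrite /binP.
case: eqP => [-> //|/eqP]; rewrite ord2_neq0 => /eqP ->.
have nE : (n%:R : R) = (counts b ord0)%:R + (counts b (lift ord0 ord0))%:R.
  by rewrite -natrD counts_ord2.
have n_ne0 : (n%:R : R) != 0 by rewrite pnatr_eq0 -lt0n.
by rewrite nE; field; rewrite -nE.
Qed.

Lemma V_join (n k : nat) (P : 'I_k.+2 -> R) (P' : 'I_k.+1 -> R)
    (b : {ffun 'I_n -> 'I_2}) (r : {ffun 'I_n -> 'I_k.+1}) :
  (0 < n)%N -> (forall i, P (lift ord0 i) = (1 - P ord0) * P' i) ->
  (forall j, b j != ord0 -> 0 < 1 - P ord0 /\ 0 < P' (r j)) ->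
  V P (join_sample b r) = V (binP (P ord0)) b +
    (#|[set j | b j != ord0]|%:R / n%:R) * V P' (restrict [set j | b j != ord0] r).
Proof.
move=> n_gt0 hP hsupp; set C := [set j | b j != ord0].
have n_ne0 : (n%:R : R) != 0 by rewrite pnatr_eq0 -lt0n.
have q0E : 1 - (counts b ord0)%:R / n%:R = #|C|%:R / n%:R :> R.
  have nE : (n%:R : R) = (counts b ord0)%:R + #|C|%:R.
    by rewrite -natrD -counts_neq0 counts_ord2.
  by rewrite nE; field; rewrite -nE.
have counts_le i : (counts (restrict C r) i <= #|C|)%N.
  by rewrite -[X in (_ <= X)%N]card_ord; apply: max_card.
rewrite V_binP // /V.
rewrite (@KL_chain _ _ _ _ (fun i => (counts (restrict C r) i)%:R / #|C|%:R) P').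
- by rewrite counts_join0 q0E.
- move=> i; rewrite counts_join_lift counts_join0 q0E.
  have [C0|C_gt0] := posnP #|C|.
    have -> : counts (restrict C r) i = 0%N.
      by apply/eqP; rewrite -leqn0 (leq_trans (counts_le i)) // C0.
    by rewrite C0 !mul0r.
  by field; rewrite pnatr_eq0 -lt0n C_gt0.
- exact: hP.
- rewrite counts_join0 ler_pdivrMr ?ltr0n // mul1r ler_nat.
  exact: leq_trans (leq_addr _ _) (eq_leq (counts_ord2 b)).
- by move=> i; rewrite divr_ge0.
- rewrite counts_join0 -subr_gt0 q0E => C_gt0.
  have C_ne0 : (#|C|%:R : R) != 0.
    by apply: contraTneq C_gt0 => ->; rewrite mul0r ltxx.
  by rewrite -mulr_suml -natr_sum sum_counts divff.
- move=> i; rewrite mulf_eq0 negb_or pnatr_eq0 -lt0n => /andP[/card_gt0P[j]].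
  by rewrite inE ffunE join_outcome_eq_lift => /andP[/hsupp + /eqP <-].
Qed.
End EmpiricalDivergence.

Section MomentGeneratingFunction.
Variable R : realType.

Lemma sum_sample_prob (n k : nat) (P : 'I_k -> R) :
  \sum_(s : {ffun 'I_n -> 'I_k}) sample_prob P s = (\sum_i P i) ^+ n.
Proof.
by rewrite /sample_prob -(bigA_distr_bigA (fun (_ : 'I_n) i => P i)) prodr_const card_ord.
Qed.

Lemma mgf_V0 (n k : nat) (P : 'I_k -> R) : mgf_V n P 0 = (\sum_i P i) ^+ n.
Proof.
by rewrite -sum_sample_prob; apply: eq_bigr => s _; rewrite mul0r expR0 mulr1.
Qed.

Lemma mgf_V_point (n k : nat) (P : 'I_k -> R) i0 t :
  (0 < n)%N -> (forall i, P i = (i == i0)%:R) -> mgf_V n P t = 1.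
Proof.
move=> n_gt0 hP.
have n_ne0 : (n%:R : R) != 0 by rewrite pnatr_eq0 -lt0n.
have term (s : {ffun 'I_n -> 'I_k}) :
    sample_prob P s * expR (t * V P s) = sample_prob P s.
  have [->|/prodf_neq0 s_i0] := eqVneq (sample_prob P s) 0; first by rewrite mul0r.
  suff -> : V P s = 0 by rewrite mulr0 expR0 mulr1.
  have sE j : s j = i0 by apply/eqP; move: (s_i0 j isT); rewrite hP pnatr_eq0 eqb0 negbK.
  apply: big1 => i _; have [->|i_ne] := eqVneq i i0.
    have -> : counts s i0 = n.
      have allE : [set j | s j == i0] = [set: 'I_n].
        by apply/setP => j; rewrite !inE sE eqxx.
      by rewrite /counts allE cardsT card_ord.
    by rewrite divff // hP eqxx divr1 ln1 mulr0; case: ifP.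
  have -> : counts s i = 0%N.
    by apply: eq_card0 => j; rewrite inE sE eq_sym (negbTE i_ne).
  by rewrite mul0r eqxx.
rewrite /mgf_V (eq_bigr _ (fun s _ => term s)) sum_sample_prob (bigD1 i0) //=.
by rewrite big1 ?addr0 ?hP ?eqxx ?expr1n // => i /negbTE; rewrite hP => ->.
Qed.

Lemma is_distr_le1 (k : nat) (P : 'I_k -> R) i : is_distr P -> P i <= 1.
Proof. by case=> P_ge0 <-; rewrite (bigD1 i) //= lerDl sumr_ge0. Qed.

Lemma binP_lift (p : R) : binP p (lift ord0 ord0) = 1 - p.
Proof. by []. Qed.

Lemma binP_ge0 (p : R) i : 0 <= p <= 1 -> 0 <= binP p i.
Proof. by case/andP=> p_ge0 p_le1; rewrite /binP; case: eqP; rewrite ?subr_ge0. Qed.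

(* The conditional law of the outcome given that it is not [ord0]; when
   [P ord0 = 1] it is irrelevant and we pick a point mass. *)
Definition cond_tail (k : nat) (P : 'I_k.+2 -> R) : 'I_k.+1 -> R :=
  fun i => if P ord0 == 1 then (i == ord0)%:R else P (lift ord0 i) / (1 - P ord0).

Lemma sum_lift_distr (k : nat) (P : 'I_k.+2 -> R) :
  is_distr P -> \sum_i P (lift ord0 i) = 1 - P ord0.
Proof. by case=> _ <-; rewrite [in RHS]big_ord_recl addrAC subrr add0r. Qed.

Lemma cond_tailE (k : nat) (P : 'I_k.+2 -> R) i :
  is_distr P -> P (lift ord0 i) = (1 - P ord0) * cond_tail P i.
Proof.
move=> hP; rewrite /cond_tail; case: eqP => [P0|/eqP P0_ne1]; last first.
  by rewrite mulrC divfK // subr_eq0 eq_sym.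
have := sum_lift_distr hP; rewrite P0 subrr mul0r => /psumr_eq0P -> //.
by move=> j _; case: hP.
Qed.

Lemma cond_tail_distr (k : nat) (P : 'I_k.+2 -> R) :
  is_distr P -> is_distr (cond_tail P).
Proof.
move=> hP; have [P_ge0 _] := hP.
rewrite /is_distr /cond_tail; case: eqP => [_|/eqP P0_ne1].
  split=> [i|]; first exact: ler0n.
  by rewrite (bigD1 ord0) //= big1 ?addr0 // => i /negbTE ->.
have P0_lt1 : 0 < 1 - P ord0.
  by rewrite subr_gt0 lt_neqAle P0_ne1 is_distr_le1.
split=> [i|]; first by rewrite divr_ge0 ?P_ge0 ?ltW.
by rewrite -mulr_suml sum_lift_distr // divff // gt_eqF.
Qed.

Lemma join_outcome_mixture (k : nat) (P : 'I_k.+2 -> R) (P' : 'I_k.+1 -> R) s :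
  (forall i, P (lift ord0 i) = (1 - P ord0) * P' i) -> \sum_i P' i = 1 ->
  P s = \sum_(x : 'I_2 * 'I_k.+1 | join_outcome x.1 x.2 == s) binP (P ord0) x.1 * P' x.2.
Proof.
move=> hP P'_sum; rewrite big_mkcond.
rewrite -(pair_bigA _ (fun b r =>
  if join_outcome b r == s then binP (P ord0) b * P' r else 0)).
rewrite big_ord_recl big_ord1 /=.
case: (unliftP ord0 s) => [i ->|->].
  rewrite big1 ?add0r // -big_mkcond (eq_bigl (pred1 i)) => [|r].
    by rewrite big_pred1_eq binP_lift hP.
  by rewrite /= join_outcome_eq_lift.
rewrite [X in _ + X]big1 ?addr0 //=.
by rewrite -mulr_sumr P'_sum mulr1.
Qed.

Lemma weighted_expV_join (n k : nat) (P : 'I_k.+2 -> R) (P' : 'I_k.+1 -> R) t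
    (b : {ffun 'I_n -> 'I_2}) (r : {ffun 'I_n -> 'I_k.+1}) :
  (0 < n)%N -> P ord0 <= 1 -> (forall i, 0 <= P' i) ->
  (forall i, P (lift ord0 i) = (1 - P ord0) * P' i) ->
  sample_prob (binP (P ord0)) b * sample_prob P' r * expR (t * V P (join_sample b r)) =
  sample_prob (binP (P ord0)) b * expR (t * V (binP (P ord0)) b) *
    (sample_prob P' r * expR (t * (#|[set j | b j != ord0]|%:R / n%:R) *
                                  V P' (restrict [set j | b j != ord0] r))).
Proof.
move=> n_gt0 P0_le1 P'_ge0 hP; rewrite mulrACA.
have [->|] := eqVneq (sample_prob (binP (P ord0)) b * sample_prob P' r) 0.
  by rewrite !mul0r.
rewrite mulf_eq0 negb_or => /andP[/prodf_neq0 b_ne0 /prodf_neq0 r_ne0].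
rewrite (V_join n_gt0 hP) ?mulrDr ?expRD ?mulrA // => j bj.
move: (b_ne0 j isT) (r_ne0 j isT); rewrite ord2_neq0 in bj; rewrite (eqP bj) binP_lift.
by rewrite !lt0r => -> ->; rewrite subr_ge0 P0_le1 P'_ge0.
Qed.

Lemma mgf_V_split (n k : nat) (P : 'I_k.+2 -> R) (P' : 'I_k.+1 -> R) t :
  (0 < n)%N -> is_distr P -> is_distr P' ->
  (forall i, P (lift ord0 i) = (1 - P ord0) * P' i) ->
  mgf_V n P t = \sum_(b : {ffun 'I_n -> 'I_2})
    sample_prob (binP (P ord0)) b * expR (t * V (binP (P ord0)) b) *
    mgf_V #|[set j | b j != ord0]| P' (t * (#|[set j | b j != ord0]|%:R / n%:R)).
Proof.
move=> n_gt0 hP [P'_ge0 P'_sum] hP'.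
pose e (s : {ffun 'I_n -> 'I_k.+2}) := expR (t * V P s).
have -> : mgf_V n P t = \sum_(s : {ffun 'I_n -> 'I_k.+2})
    (\prod_j \sum_(x | join_outcome x.1 x.2 == s j) binP (P ord0) x.1 * P' x.2) * e s.
  apply: eq_bigr => s _; congr (_ * _).
  by apply: eq_bigr => j _; apply: join_outcome_mixture.
rewrite -sum_prod_pushforward.
have joinE (u : {ffun 'I_n -> 'I_2 * 'I_k.+1}) :
    [ffun j => join_outcome (u j).1 (u j).2] =
    join_sample [ffun j => (u j).1] [ffun j => (u j).2].
  by apply/ffunP => j; rewrite !ffunE.
under eq_bigr do rewrite joinE.
rewrite -(sum_prod_pair _ _ (fun b r => e (join_sample b r))).
apply: eq_bigr => b _; set C := [set j | b j != ord0].
have restrictE := sum_prod_restrict (B := C)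
  (fun r' => expR (t * (#|C|%:R / n%:R) * V P' r')) P'_sum.
cbv beta in restrictE.
rewrite /mgf_V /sample_prob -restrictE mulr_sumr.
apply: eq_bigr => r _.
exact: weighted_expV_join n_gt0 (is_distr_le1 ord0 hP) P'_ge0 hP'.
Qed.

End MomentGeneratingFunction.

Section Tensorization.
Variables (R : realType) (f : R -> R).
Hypothesis hf : forall (n : nat) (t p : R), (0 < n)%N -> 0 <= t -> t < n%:R ->
  0 <= p -> p <= 1 -> mgf_V n (binP p) t <= f (t / n%:R).

Lemma f_ge1 (n : nat) (t : R) : (0 < n)%N -> 0 <= t -> t < n%:R -> 1 <= f (t / n%:R).
Proof.
move=> n_gt0 t_ge0 t_lt_n.
have binP0 i : binP (0 : R) i = (i == lift ord0 ord0)%:R.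
  by rewrite /binP subr0 -ord2_neq0; case: eqP.
have := hf n_gt0 t_ge0 t_lt_n (lexx 0) ler01.
by rewrite (mgf_V_point _ n_gt0 binP0).
Qed.

Lemma mgf_V_le_pow (k n : nat) (P : 'I_k.+1 -> R) t :
  (0 < n)%N -> is_distr P -> 0 <= t -> t < n%:R -> mgf_V n P t <= f (t / n%:R) ^+ k.
Proof.
elim: k n P t => [|k IH] n P t n_gt0 hP t_ge0 t_lt_n.
  rewrite expr0 (@mgf_V_point _ _ _ _ ord0) // => i.
  by rewrite (ord1 i) eqxx; case: hP => _ <-; rewrite big_ord1.
have one_le_f := f_ge1 n_gt0 t_ge0 t_lt_n.
have P0_01 : 0 <= P ord0 <= 1 by rewrite is_distr_le1 // andbT; case: hP.
have hP' := cond_tail_distr hP.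
rewrite (mgf_V_split t n_gt0 hP hP' (fun i => cond_tailE i hP)).
set P' := cond_tail P.
have inner (b : {ffun 'I_n -> 'I_2}) :
    mgf_V #|[set j | b j != ord0]| P' (t * (#|[set j | b j != ord0]|%:R / n%:R))
      <= f (t / n%:R) ^+ k.
  set c := #|[set j | b j != ord0]|; have [c0|c_gt0] := posnP c.
    by rewrite c0 mul0r mulr0 mgf_V0 expr0 exprn_ege1.
  have n_gt0R : (0 : R) < n%:R by rewrite ltr0n.
  have := IH c P' (t * (c%:R / n%:R)) c_gt0 hP'.
  have -> : t * (c%:R / n%:R) / c%:R = t / n%:R.
    by field; rewrite !pnatr_eq0 -!lt0n c_gt0 n_gt0.
  apply; first by rewrite mulr_ge0 ?divr_ge0.
  by rewrite mulrCA gtr_pMr ?ltr0n // ltr_pdivrMr // mul1r.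
apply: (le_trans (y := \sum_(b : {ffun 'I_n -> 'I_2})
  sample_prob (binP (P ord0)) b * expR (t * V (binP (P ord0)) b) * f (t / n%:R) ^+ k)).
  apply: ler_sum => b _; apply: ler_wpM2l (inner b).
  by rewrite mulr_ge0 ?expR_ge0 // prodr_ge0 // => j _; exact: binP_ge0.
rewrite -mulr_suml exprS ler_wpM2r ?exprn_ge0 ?(le_trans ler01 one_le_f) //.
by case/andP: P0_01 => P0_ge0 P0_le1; exact: hf.
Qed.

End Tensorization.

Theorem proposition2p3 (R : realType) (f : R -> R)
  (hf : forall (n : nat) (t p : R), (0 < n)%N -> 0 <= t -> t < n%:R ->
          0 <= p -> p <= 1 ->
          mgf_V n (binP p) t <= f (t / n%:R))
  (k n : nat) (P : 'I_k -> R) (hk : (2 <= k)%N) (hn : (0 < n)%N)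
  (hP : is_distr P) (t : R) (ht0 : 0 <= t) (htn : t < n%:R) :
  mgf_V n P t <= f (t / n%:R) ^+ (k - 1).
Proof.
case: k P hk hP => [//|k] P _ hP.
by rewrite subn1; apply: (mgf_V_le_pow hf hn hP ht0 htn).
Qed.
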